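(* Let $L$ be the set of all nonempty finite subsets of $\omega$. For $n\in\mathbb{N}$ let $x_n^*\in[-1,1]^L$ be given by $x_n^*(A)=1$ if $n\in A$ and $x_n^*(A)=0$ otherwise, and define $\Phi: FBL(L) \to \mathbb{R}^{\mathbb{N}}$ by $\Phi(f)=(f(x_n^* ))_{n\in\mathbb{N}}$. Then: (1) $\Phi(\delta_A) = \sum_{i \in A}e_i$ for every $A \in L$, where $(e_i)$ are the unit vectors of $c_0$; (2) $\Phi(f)\in c_0$ for every $f\in FBL(L)$, and $\Phi: FBL(L)\to c_0$ is a Banach lattice homomorphism; (3) $\Phi: FBL(L)\to c_0$ is surjective.
   Context: Here $\omega$ denotes the set of natural numbers, indexed so that the coordinates of $c_0$ correspond to its elements. For a nonempty set $A$ and $x\in A$, $\delta_x:[-1,1]^A\to[-1,1]$ is $\delta_x(x^* )=x^*(x)$. For $f:[-1,1]^A\to\mathbb{R}$, $$\|f\| = \sup \Big\{\sum_{i = 1}^n | f(x_{i}^{\ast})| : n \in \mathbb{N},\ x_1^{\ast}, \ldots, x_n^{\ast} \in [-1,1]^A,\ \sup_{x \in A} \sum_{i=1}^n |x_i^{\ast}(x)| \leq 1 \Big\}.$$ $FBL(A)$ is the Banach lattice generated by the functions $\delta_x$ ($x\in A$) inside the Banach lattice of all functions $[-1,1]^A\to\mathbb{R}$ with finite norm (pointwise operations and order). *)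

From HB Require Import structures.
From mathcomp Require Import all_boot all_order all_algebra.
From mathcomp Require Import all_classical all_reals.
From mathcomp Require Import ereal topology normedtype sequences.
From mathcomp Require Import Rstruct Rstruct_topology.
From Stdlib Require Import Rdefinitions.

Set Implicit Arguments. Unset Strict Implicit. Unset Printing Implicit Defensive.
Import Order.TTheory GRing.Theory Num.Theory.
Import numFieldNormedType.Exports.
Local Open Scope classical_set_scope.
Local Open Scope ring_scope.

Definition cube (A : Type) : Type :=
  {x : A -> R | forall a, -1 <= x a <= 1}.

Definition delta (A : Type) (x : A) : cube A -> R := fun p => sval p x.

Definition admissible (A : Type) (n : nat) (xs : 'I_n -> cube A) : Prop :=
  forall x : A, \sum_(i < n) `|sval (xs i) x| <= 1.

Definition fblnorm (A : Type) (f : cube A -> R) : \bar R :=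
  ereal_sup [set (r%:E)%E | r in
     [set r : R | exists n (xs : 'I_n -> cube A),
        admissible xs /\ r = \sum_(i < n) `|f (xs i)| ]].

Definition Hfin (A : Type) : set (cube A -> R) :=
  [set f | (fblnorm f < +oo)%E].
Arguments Hfin : clear implicits.

Definition closed_sublattice (A : Type) (S : set (cube A -> R)) : Prop :=
  [/\ S `<=` Hfin A,
      (forall f g, S f -> S g -> S (f \+ g)),
      (forall (c : R) f, S f -> S (fun p => c * f p)),
      (forall f g, S f -> S g -> S (fun p => Num.max (f p) (g p))) &
      (forall (u : nat -> cube A -> R) (f : cube A -> R),
          (forall k, S (u k)) -> Hfin A f ->
          (forall eps : R, 0 < eps ->
              \forall k \near \oo, (fblnorm (fun p => (u k p - f p)%R) <= eps%:E)%E) ->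
          S f)].

Definition FBL (A : Type) : set (cube A -> R) :=
  \bigcap_(S in [set S | closed_sublattice S /\ forall x : A, S (delta x)]) S.

Definition L : Type := {B : set nat | finite_set B /\ B !=set0}.

Lemma xstar_in_cube (n : nat) :
  forall B : L, -1 <= ((n \in sval B)%:R : R) <= 1.
Proof.
move=> B; case: (n \in sval B) => /=.
- by rewrite lexx andbT; apply: (@le_trans _ _ 0); rewrite ?oppr_le0 ?ler01.
- by rewrite ler01 andbT oppr_le0 ler01.
Qed.

Definition xstar (n : nat) : cube L :=
  exist _ (fun B : L => ((n \in sval B)%:R : R)) (xstar_in_cube n).

Definition Phi (f : cube L -> R) : nat -> R := fun n => f (xstar n).

Definition unitv (i : nat) : nat -> R := fun n => ((i == n)%:R : R).

Definition c0 (u : nat -> R) : Prop := u @ \oo --> (0 : R).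

Definition lattice_hom_on (S : set (cube L -> R))
    (T : (cube L -> R) -> nat -> R) : Prop :=
  [/\ (forall f g, S f -> S g -> T (f \+ g) = T f \+ T g),
      (forall (c : R) f, S f -> T (fun p => c * f p) = (fun n => c * T f n)) &
      (forall f g, S f -> S g ->
          T (fun p => Num.max (f p) (g p)) = (fun n => Num.max (T f n) (T g n)))].

From HB Require Import structures.
From mathcomp Require Import all_boot all_order all_algebra.
From mathcomp Require Import all_classical all_reals.
From mathcomp Require Import ereal topology normedtype sequences.
From mathcomp Require Import Rstruct Rstruct_topology.
From Stdlib Require Import Rdefinitions.
From mathcomp Require Import ring lra.
Import Order.TTheory GRing.Theory Num.Theory.
Import numFieldNormedType.Exports.
Local Open Scope classical_set_scope.
Local Open Scope ring_scope.
Set Implicit Arguments. Unset Strict Implicit. Unset Printing Implicit Defensive.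

(* Evaluation at the points x*_n is a lattice homomorphism on all functions, so for (2)
   it suffices that the f of finite norm with (f x*_n)_n in c_0 form a closed
   sublattice: it contains every delta_A because A is finite, and it is closed because
   evaluation at a point is bounded by the norm.  For (3) write c = c^+ - c^- and let
   0 <= c <= M.  With thresholds t_k = M/(k+1) decreasing to 0 and N_k such that
   c_n <= t_(k+1) for n > N_k, the layer
     g_k = (min (sum_(m <= N_k) (c_m - t_(k+1)) delta_{m}, (t_k - t_(k+1)) delta_[0,N_k]))^+
   takes the value min(c_n, t_k) - min(c_n, t_(k+1)) at x*_n, so the layers telescope
   to c at every x*_n, while g_k <= (t_k - t_(k+1)) |delta_[0,N_k]| bounds the norm of
   the tail sum_(k >= K) g_k by t_K, so the series of layers converges in FBL(L). *)

Section NormBounds.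
Variable A : Type.
Implicit Types (f g h : cube A -> R) (p : cube A).

Definition fbl_bounded f (C : R) :=
  forall n (xs : 'I_n -> cube A), admissible xs -> \sum_(i < n) `|f (xs i)| <= C.

Lemma fblnorm_le f C : fbl_bounded f C -> (fblnorm f <= C%:E)%E.
Proof.
move=> fC; apply: ge_ereal_sup => _ [r [n [xs [adm ->]]] <-].
by rewrite lee_fin; exact: fC.
Qed.

Lemma sum_le_fblnorm f n (xs : 'I_n -> cube A) : admissible xs ->
  ((\sum_(i < n) `|f (xs i)|)%:E <= fblnorm f)%E.
Proof.
move=> adm; apply: ereal_sup_ubound.
by exists (\sum_(i < n) `|f (xs i)|); first by exists n, xs.
Qed.

Lemma HfinP f : Hfin A f <-> exists C, fbl_bounded f C.
Proof.
split=> [|[C /fblnorm_le fC]]; last by rewrite /Hfin /=; apply: le_lt_trans fC _; exact: ltry.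
rewrite /Hfin /=; case E: (fblnorm f) => [C| |] // _.
  by exists C => n xs /(sum_le_fblnorm f); rewrite E lee_fin.
by exists 0 => n xs /(sum_le_fblnorm f); rewrite E leeNy_eq.
Qed.

Lemma cube_norm_le1 p (x : A) : `|sval p x| <= 1.
Proof. by rewrite ler_norml; case: p => q /= /(_ x). Qed.

Lemma norm_le_fblnorm f p : (`|f p|%:E <= fblnorm f)%E.
Proof.
have adm : admissible (fun _ : 'I_1 => p).
  by move=> x; rewrite big_ord1; exact: cube_norm_le1.
by have := sum_le_fblnorm f adm; rewrite big_ord1.
Qed.

Lemma Hfin_dom f g h (K : R) : 0 <= K -> Hfin A f -> Hfin A g ->
  (forall p, `|h p| <= K * (`|f p| + `|g p|)) -> Hfin A h.
Proof.
move=> K0 /HfinP[C1 fC1] /HfinP[C2 gC2] hfg; apply/HfinP; exists (K * (C1 + C2)).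
move=> n xs adm; apply: le_trans (_ : \sum_(i < n) K * (`|f (xs i)| + `|g (xs i)|) <= _).
  by apply: ler_sum => i _; exact: hfg.
by rewrite -mulr_sumr big_split ler_wpM2l // lerD ?fC1 ?gC2.
Qed.

End NormBounds.

Lemma norm_max_le (T : realDomainType) (a b : T) : `|Num.max a b| <= `|a| + `|b|.
Proof. by case: (lerP a b) => _; rewrite ?lerDr ?lerDl normr_ge0. Qed.

Section FBLClosure.
Variable A : Type.
Implicit Types f g : cube A -> R.

Lemma FBL_sub (S : set (cube A -> R)) :
  closed_sublattice S -> (forall x, S (delta x)) -> @FBL A `<=` S.
Proof. by move=> hS hd f Ff; apply: Ff; split. Qed.

Lemma FBL_delta (x : A) : FBL (delta x).
Proof. by move=> S [_]; apply. Qed.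

Lemma FBLD f g : FBL f -> FBL g -> FBL (f \+ g).
Proof.
by move=> hf hg S [hS hd]; case: (hS) => _ hD _ _ _; apply: hD; [exact: hf | exact: hg].
Qed.

Lemma FBLZ (a : R) f : FBL f -> FBL (fun p => a * f p).
Proof. by move=> hf S [hS hd]; case: (hS) => _ _ hZ _ _; apply: hZ; exact: hf. Qed.

Lemma FBL_max f g : FBL f -> FBL g -> FBL (fun p => Num.max (f p) (g p)).
Proof.
by move=> hf hg S [hS hd]; case: (hS) => _ _ _ hM _; apply: hM; [exact: hf | exact: hg].
Qed.

Lemma FBL_min f g : FBL f -> FBL g -> FBL (fun p => Num.min (f p) (g p)).
Proof.
move=> hf hg; have -> : (fun p => Num.min (f p) (g p)) =
    (fun p => -1 * Num.max (-1 * f p) (-1 * g p)).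
  by apply/funext => p; rewrite !mulN1r -oppr_min opprK.
by apply: FBLZ; apply: FBL_max; apply: FBLZ.
Qed.

Lemma FBL_lim (u : nat -> cube A -> R) f : (forall k, FBL (u k)) -> Hfin A f ->
  (forall eps : R, 0 < eps ->
     \forall k \near \oo, (fblnorm (fun p => (u k p - f p)%R) <= eps%:E)%E) ->
  FBL f.
Proof.
by move=> hu hf hc S [hS hd]; case: (hS) => _ _ _ _ hL; apply: hL hf hc => k; exact: hu.
Qed.

(* FBL of an empty type is empty (set0 is a closed sublattice), hence the point x. *)
Lemma FBL0 (x : A) : FBL (fun _ : cube A => 0).
Proof.
have -> : (fun _ : cube A => 0) = (fun p => 0 * delta x p) by apply/funext => p; rewrite mul0r.
exact: FBLZ (FBL_delta x).
Qed.

Lemma FBL_sum (x : A) (F : nat -> cube A -> R) N : (forall k, FBL (F k)) ->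
  FBL (fun p => \sum_(k < N) F k p).
Proof.
move=> hF; elim: N => [|N IH].
  by under eq_fun do rewrite big_ord0; exact: FBL0 x.
by under eq_fun do rewrite big_ord_recr; exact: FBLD.
Qed.

End FBLClosure.

Lemma c0P (a : nat -> R) :
  c0 a <-> forall e : R, 0 < e -> \forall n \near \oo, `|a n| < e.
Proof. exact: (@cvgr0Pnorm_lt _ R^o _ _ _ a). Qed.

Lemma c0_dom (a b w : nat -> R) (K : R) : 0 < K -> c0 a -> c0 b ->
  (forall n, `|w n| <= K * (`|a n| + `|b n|)) -> c0 w.
Proof.
move=> K0 /c0P ca /c0P cb hw; apply/c0P => e e0.
have e2K : 0 < e / (2 * K) by rewrite divr_gt0 // mulr_gt0.
apply: filterS2 (ca _ e2K) (cb _ e2K) => n an bn.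
apply: le_lt_trans (hw n) _.
have -> : e = K * (e / (2 * K) + e / (2 * K)) by field; rewrite gt_eqF.
by rewrite ltr_pM2l // ltrD.
Qed.

Lemma c0_uniform_lim (u : nat -> nat -> R) (a : nat -> R) : (forall k, c0 (u k)) ->
  (forall e : R, 0 < e -> exists k, forall n, `|u k n - a n| <= e) -> c0 a.
Proof.
move=> cu ua; apply/c0P => e e0.
have e2 : 0 < e / 2 by rewrite divr_gt0.
have [k uka] := ua _ e2; move/c0P/(_ _ e2): (cu k); apply: filterS => n ukn.
have -> : a n = u k n - (u k n - a n) by rewrite opprB addrC subrK.
by apply: le_lt_trans (ler_normB _ _) _; rewrite [e]splitr ltr_leD.
Qed.

Lemma c0_bounded (c : nat -> R) : c0 c -> exists2 M : R, 0 < M & forall n, `|c n| <= M.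
Proof.
move=> c0c; have cvgc : cvgn c by apply/cvg_ex; exists 0.
have := @cvg_seq_bounded _ R^o c cvgc; rewrite /bounded_near => /filter_ex[M cM].
exists (`|M| + 1) => [|n]; first by rewrite ltr_wpDl.
by apply: le_trans (cM n I) _; rewrite ler_wpDr // ler_norm.
Qed.

Lemma PhiE_delta (B : L) n : Phi (delta B) n = (n \in sval B)%:R.
Proof. by []. Qed.

Lemma Phi_delta (B : L) : Phi (delta B) = \sum_(i \in sval B) unitv i.
Proof.
have fB := proj1 (svalP B).
rewrite fsbig_finite // fct_sumE; apply/funext => n.
rewrite PhiE_delta /unitv -(in_fset_set fB) -count_uniq_mem ?finmap.fset_uniq //.
by rewrite -sum1_count big_mkcond natr_sum /=; apply: eq_bigr => j _; case: eqP.
Qed.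

Lemma Phi_lattice_hom (S : set (cube L -> R)) : lattice_hom_on S Phi.
Proof. by []. Qed.

Definition Phi_c0_set : set (cube L -> R) := [set f | Hfin L f /\ c0 (Phi f)].

Lemma Phi_c0_set_dom f g h (K : R) : 0 < K -> Phi_c0_set f -> Phi_c0_set g ->
  (forall p, `|h p| <= K * (`|f p| + `|g p|)) -> Phi_c0_set h.
Proof.
move=> K0 [hf cf] [hg cg] hfg; split; first exact: Hfin_dom (ltW K0) hf hg hfg.
exact: c0_dom K0 cf cg (fun n => hfg (xstar n)).
Qed.

Lemma closed_sublattice_Phi_c0 : closed_sublattice Phi_c0_set.
Proof.
split.
- by move=> f [].
- by move=> f g Sf Sg; apply: (Phi_c0_set_dom ltr01 Sf Sg) => p; rewrite mul1r ler_normD.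
- move=> a f Sf; apply: (@Phi_c0_set_dom _ _ _ (`|a| + 1) _ Sf Sf) => [|p].
    by rewrite ltr_wpDl.
  by rewrite normrM ler_pM ?lerDl ?normr_ge0.
- by move=> f g Sf Sg; apply: (Phi_c0_set_dom ltr01 Sf Sg) => p; rewrite mul1r norm_max_le.
- move=> u f Su hf uf; split => //.
  apply: (c0_uniform_lim (u := fun k => Phi (u k))) => [k|e e0]; first exact: (Su k).2.
  have [k uk_f] := filter_ex (uf _ e0).
  by exists k => n; rewrite -lee_fin; apply: le_trans uk_f; apply: norm_le_fblnorm.
Qed.

Lemma finite_set_bounded (B : set nat) :
  finite_set B -> exists N : nat, forall n, B n -> (n < N)%nat.
Proof.
move=> fB; exists (\max_(i <- finmap.enum_fset (fset_set B)) i)%N.+1 => n Bn.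
by rewrite ltnS; apply: (@leq_bigmax_seq _ _ _ id); rewrite // in_fset_set // inE.
Qed.

Lemma Phi_delta_c0 (B : L) : c0 (Phi (delta B)).
Proof.
apply/c0P => e e0; have [N BN] := finite_set_bounded (proj1 (svalP B)).
apply: filterS (nbhs_infty_ge N) => n Nn; rewrite PhiE_delta.
case: (boolP (n \in sval B)) => [/set_mem/BN|_]; last by rewrite normr0.
by rewrite ltnNge Nn.
Qed.

Lemma FBL_Phi_c0 f : FBL f -> c0 (Phi f).
Proof.
move=> /(FBL_sub closed_sublattice_Phi_c0) [] // B; split; last exact: Phi_delta_c0.
by apply/HfinP; exists 1 => n xs; apply.
Qed.

Definition singleton (m : nat) : L :=
  exist _ [set m] (conj (finite_set1 m) (ex_intro _ m erefl)).

Definition initial_segment (N : nat) : L :=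
  exist _ `I_N.+1 (conj (finite_II _) (ex_intro _ 0%N (ltn0Sn N))).

Lemma sum_scaled_singletons_xstar (F : nat -> R) K n :
  \sum_(m < K) F m * delta (singleton m) (xstar n) = if (n < K)%nat then F n else 0.
Proof.
transitivity (\sum_(m < K | m == n :> nat) F m); last exact: big_ord1_eq.
rewrite [RHS]big_mkcond; apply: eq_bigr => m _.
by rewrite [delta _ _]/= in_set1 eq_sym; case: eqP => _; rewrite ?mulr1 ?mulr0.
Qed.

Lemma max0_min_subr (T : realFieldType) (x a b : T) : b <= a ->
  Num.max 0 (Num.min (x - b) (a - b)) = Num.min x a - Num.min x b.
Proof.
move=> ba; case: (lerP x a); case: (lerP x b); case: (lerP (x - b) (a - b));
  case: (lerP 0 (x - b)); case: (lerP 0 (a - b)); lra.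
Qed.

Section NonnegativePreimage.
Variables (c t : nat -> R) (N : nat -> nat).
Hypothesis c_ge0 : forall n, 0 <= c n.
Hypothesis c_le_t0 : forall n, c n <= t 0.
Hypothesis t_ge0 : forall k, 0 <= t k.
Hypothesis t_noninc : forall k, t k.+1 <= t k.
Hypothesis t_c0 : c0 t.
Hypothesis c_le_tail : forall k n, (N k < n)%nat -> c n <= t k.+1.

Definition gap k := t k - t k.+1.

Definition layer k (p : cube L) := Num.max 0 (Num.min
  (\sum_(m < (N k).+1) (c m - t k.+1) * delta (singleton m) p)
  (gap k * delta (initial_segment (N k)) p)).

Definition partial_layers K (p : cube L) := \sum_(k < K) layer k p.

Definition layers (p : cube L) := limn (partial_layers ^~ p).

Lemma gap_ge0 k : 0 <= gap k.
Proof. by rewrite subr_ge0. Qed.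

Lemma sum_gap K K' : (K <= K')%nat -> \sum_(K <= k < K') gap k = t K - t K'.
Proof.
move=> KK'; rewrite (telescope_sumr_eq (fun k => - t k) _ KK') => [|k _];
  by rewrite opprK addrC.
Qed.

Lemma layer_ge0 k p : 0 <= layer k p.
Proof. by rewrite le_max lexx. Qed.

Lemma layer_le k p : layer k p <= gap k * `|delta (initial_segment (N k)) p|.
Proof.
rewrite ge_max mulr_ge0 ?gap_ge0 ?normr_ge0 //=.
by rewrite ge_min ler_wpM2l ?gap_ge0 ?ler_norm ?orbT.
Qed.

Lemma layer_xstar k n :
  layer k (xstar n) = Num.min (c n) (t k) - Num.min (c n) (t k.+1).
Proof.
have tk := t_noninc k.
rewrite /layer (sum_scaled_singletons_xstar (fun m => c m - t k.+1)) [delta _ _]/=.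
have -> : (n \in `I_(N k).+1) = (n < (N k).+1)%nat by apply/idP/idP => [/set_mem|/mem_set].
case: ifP => [_|/negbT]; first by rewrite mulr1 max0_min_subr.
rewrite -leqNgt => /c_le_tail cn; rewrite mulr0 minxx maxxx.
by rewrite !min_l ?subrr //; apply: le_trans tk.
Qed.

Lemma partial_layers_xstar K n :
  partial_layers K (xstar n) = c n - Num.min (c n) (t K).
Proof.
rewrite /partial_layers; under eq_bigr do rewrite layer_xstar.
rewrite -(big_mkord xpredT (fun k => Num.min (c n) (t k) - Num.min (c n) (t k.+1))).
rewrite (telescope_sumr_eq (fun k => - Num.min (c n) (t k)) _ (leq0n K)) => [|k _].
  by rewrite opprK (min_l (c_le_t0 n)) addrC.
by rewrite opprK addrC.
Qed.

Lemma layer_le_gap k p : layer k p <= gap k.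
Proof. by apply: le_trans (layer_le k p) _; rewrite ler_piMr ?gap_ge0 ?cube_norm_le1. Qed.

Lemma partial_layersE K K' p : (K <= K')%nat ->
  partial_layers K' p = partial_layers K p + \sum_(K <= k < K') layer k p.
Proof.
move=> KK'; rewrite /partial_layers -!(big_mkord xpredT (layer^~ p)).
exact: big_cat_nat (leq0n K) KK'.
Qed.

Lemma partial_layers0 p : partial_layers 0 p = 0.
Proof. exact: big_ord0. Qed.

Lemma partial_layers_nondecreasing p :
  {homo partial_layers^~ p : K K' / (K <= K')%nat >-> K <= K'}.
Proof.
move=> K K' KK'; rewrite (partial_layersE p KK') lerDl.
by apply: sumr_ge0 => k _; apply: layer_ge0.
Qed.

Lemma partial_layers_le K p : partial_layers K p <= t 0.
Proof.
rewrite (partial_layersE p (leq0n K)) partial_layers0 add0r.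
apply: le_trans (_ : \sum_(0 <= k < K) gap k <= _).
  by apply: ler_sum => k _; apply: layer_le_gap.
by rewrite sum_gap // lerBlDr lerDl.
Qed.

Lemma partial_layers_cvg p : cvgn (partial_layers^~ p).
Proof.
apply: nondecreasing_is_cvgn; first exact: partial_layers_nondecreasing.
by exists (t 0) => _ [K _ <-]; apply: partial_layers_le.
Qed.

Lemma partial_layers_le_layers K p : partial_layers K p <= layers p.
Proof.
exact: nondecreasing_cvgn_le (@partial_layers_nondecreasing p) (@partial_layers_cvg p) K.
Qed.

Lemma sum_layers_le n (xs : 'I_n -> cube L) K K' : admissible xs -> (K <= K')%nat ->
  \sum_(i < n) \sum_(K <= k < K') layer k (xs i) <= t K - t K'.
Proof.
move=> adm KK'; rewrite exchange_big -sum_gap //=; apply: ler_sum => k _.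
apply: le_trans (_ : \sum_(i < n) gap k * `|delta (initial_segment (N k)) (xs i)| <= _).
  by apply: ler_sum => i _; apply: layer_le.
by rewrite -mulr_sumr ler_piMr ?gap_ge0 //; apply: adm.
Qed.

Lemma sum_layers_tail_le n (xs : 'I_n -> cube L) K : admissible xs ->
  \sum_(i < n) `|layers (xs i) - partial_layers K (xs i)| <= t K.
Proof.
move=> adm; under eq_bigr do rewrite ger0_norm ?subr_ge0 ?partial_layers_le_layers //.
pose tail K' := \sum_(i < n) (partial_layers K' (xs i) - partial_layers K (xs i)).
have tail_cvg : tail @ \oo --> \sum_(i < n) (layers (xs i) - partial_layers K (xs i)).
  apply: cvg_big => //; first exact: (@pseudometric_normed_Zmodule.add_continuous R R^o).
  move=> i _; exact: (@cvgB _ R^o _ _ _ _ (fun=> partial_layers K (xs i)) _ _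
    (@partial_layers_cvg (xs i)) (cvg_cst _)).
rewrite -(cvg_lim (@Rhausdorff R) tail_cvg); apply: limr_le; first exact: cvgP tail_cvg.
apply: filterS (nbhs_infty_ge K) => K' KK'; rewrite /tail.
under eq_bigr do rewrite (partial_layersE _ KK') addrAC subrr add0r.
by apply: le_trans (sum_layers_le adm KK') _; rewrite lerBlDr lerDl.
Qed.

Lemma FBL_layer k : FBL (layer k).
Proof.
apply: FBL_max; first exact: FBL0 (singleton 0).
apply: FBL_min; last exact: FBLZ (FBL_delta _).
apply: (@FBL_sum _ (singleton 0) (fun m p => (c m - t k.+1) * delta (singleton m) p)) => m.
exact: FBLZ (FBL_delta _).
Qed.

Lemma FBL_layers : FBL layers.
Proof.
apply: (FBL_lim (u := partial_layers)) => [K||e e0].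
- exact: (@FBL_sum _ (singleton 0) layer K FBL_layer).
- apply/HfinP; exists (t 0) => n xs /(sum_layers_tail_le 0).
  by under eq_bigr do rewrite partial_layers0 subr0.
- move/c0P/(_ _ e0): t_c0; apply: filterS => K tK; apply: fblnorm_le => n xs adm.
  under eq_bigr do rewrite distrC.
  by apply: le_trans (sum_layers_tail_le K adm) _; apply/ltW/(le_lt_trans (ler_norm _)).
Qed.

Lemma Phi_layers : Phi layers = c.
Proof.
apply/funext => n; apply: (cvg_lim (@Rhausdorff R)).
under eq_fun do rewrite partial_layers_xstar.
apply/cvgrPdist_lt => e e0; move/c0P/(_ _ e0): t_c0; apply: filterS => K tK.
rewrite opprB addrC subrK ger0_norm ?le_min ?c_ge0 ?t_ge0 //.
by apply: le_lt_trans tK; rewrite ge_min ler_norm orbT.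
Qed.

End NonnegativePreimage.

Lemma Phi_surjective_nonneg (c : nat -> R) : c0 c -> (forall n, 0 <= c n) ->
  exists2 f, FBL f & Phi f = c.
Proof.
move=> c0c c_ge0; have [M M0 cM] := c0_bounded c0c.
pose t k := M * harmonic k.
have t_gt0 k : 0 < t k by rewrite mulr_gt0 // harmonic_gt0.
have t_ge0 k : 0 <= t k by apply: ltW.
have t_noninc k : t k.+1 <= t k by rewrite ler_pM2l // lef_pV2 ?ler_nat ?posrE ?ltr0n.
have c_le_t0 n : c n <= t 0 by rewrite /t /= invr1 mulr1; apply: le_trans (ler_norm _) (cM n).
have t_c0 : c0 t.
  apply: (c0_dom M0 cvg_harmonic cvg_harmonic) => k.
  by rewrite normrM (gtr0_norm M0) ler_pM2l // lerDl.
have /choice[N c_le_tail] k : exists Nk : nat, forall n, (Nk < n)%nat -> c n <= t k.+1.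
  move/c0P/(_ _ (t_gt0 k.+1)): c0c => [Nk _ cNk].
  by exists Nk => n /ltnW /cNk /(le_lt_trans (ler_norm _)) /ltW.
by exists (layers c t N); [apply: FBL_layers | apply: Phi_layers].
Qed.

Lemma Phi_surjective (c : nat -> R) : c0 c -> exists2 f, FBL f & Phi f = c.
Proof.
move=> c0c.
have c0_part (s : R) : c0 (fun n => Num.max (s * c n) 0).
  apply: (@c0_dom c c _ (`|s| + 1)) => // [|n]; first by rewrite ltr_wpDl.
  apply: le_trans (norm_max_le _ _) _; rewrite normr0 addr0 normrM.
  by rewrite ler_pM ?normr_ge0 ?lerDl ?lerDl.
have part_ge0 (s : R) n : 0 <= Num.max (s * c n) 0 by rewrite le_max lexx orbT.
have [f1 F1 Phi_f1] := Phi_surjective_nonneg (c0_part 1) (part_ge0 1).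
have [f2 F2 Phi_f2] := Phi_surjective_nonneg (c0_part (-1)) (part_ge0 (-1)).
exists (f1 \+ (fun p => -1 * f2 p)); first exact: FBLD F1 (FBLZ (-1) F2).
apply/funext => n; rewrite /Phi /= -/(Phi f1 n) -/(Phi f2 n) Phi_f1 Phi_f2 !mul1r !mulN1r.
by case: (lerP (c n) 0); case: (lerP (- c n) 0); lra.
Qed.

Theorem mainTheorem4 :
  (forall B : L, Phi (delta B) = \sum_(i \in sval B) unitv i) /\
  (forall f, FBL f -> c0 (Phi f)) /\
  lattice_hom_on (@FBL L) Phi /\
  (forall c : nat -> R, c0 c -> exists2 f, FBL f & Phi f = c).
Proof.
split; first exact: Phi_delta.
split; first exact: FBL_Phi_c0.
split; [exact: Phi_lattice_hom | exact: Phi_surjective].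
Qed.
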